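(* Let $k\geq 1$ be an integer. The Laplacian spectrum of the spider $T(k,k)$ is $$\{0^{[1]},\ \theta^{[k-1]},\ \lambda_1^{[1]},\ \overline{\theta}^{[k-1]},\ \lambda_2^{[1]}\},$$ where $\theta=\frac{3-\sqrt{5}}{2}$, $\overline{\theta}=\frac{3+\sqrt{5}}{2}$, and $\lambda_1,\lambda_2$ are the roots of $x^2-(k+3)x+2k+1$.
   Context: For a graph $G$, the Laplacian matrix is $L(G)=D(G)-A(G)$, with $D(G)$ the diagonal degree matrix and $A(G)$ the adjacency matrix; its Laplacian spectrum is the multiset of eigenvalues of $L(G)$, and $a^{[m]}$ denotes the eigenvalue $a$ with multiplicity $m$. For integers $1\leq k\leq s$, the spider $T(s,k)$ is the tree obtained from the star $K_{1,s}$ by extending $k$ of its $s$ rays by one extra edge each; it has $s+k+1$ vertices. *)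

From HB Require Import structures.
From mathcomp Require Import all_boot all_order all_algebra.
Set Implicit Arguments. Unset Strict Implicit. Unset Printing Implicit Defensive.
Import Order.TTheory GRing.Theory Num.Theory.
Local Open Scope ring_scope.

(* Spider T(s,k) on vertex set 'I_(s+k+1):
   vertex 0 = centre; vertices 1..s = the s neighbours of the centre (the rays);
   vertices s+1..s+k = the extra vertices, vertex s+i being attached to vertex i
   (1 <= i <= k), i.e. rays 1..k are extended by one edge. *)
Definition spider_edge (s k i j : nat) : bool :=
  [|| (i == 0%N) && (0 < j <= s)%N,
      (j == 0%N) && (0 < i <= s)%N,
      (0 < i <= k)%N && (j == s + i)%N
    | (0 < j <= k)%N && (i == s + j)%N].

Definition spider_adj (s k : nat) : rel 'I_(s + k + 1) :=
  fun i j => spider_edge s k i j.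

Definition deg (T : finType) (e : rel T) (v : T) : nat := #|[set w | e v w]|.

Definition laplacian (R : nzRingType) (n : nat) (e : rel 'I_n) : 'M[R]_n :=
  \matrix_(i < n, j < n)
    ((if i == j then (deg e i)%:R else 0) - (if e i j then 1 else 0)).

Definition spectrum_is (R : nzRingType) (n : nat) (A : 'M[R]_n) (s : seq R) : Prop :=
  char_poly A = \prod_(a <- s) ('X - a%:P).

Arguments spider_adj : clear implicits.
Arguments laplacian R {n} e.

From HB Require Import structures.
From mathcomp Require Import all_boot all_order all_algebra zify ring.
Import Order.TTheory GRing.Theory Num.Theory.
Local Open Scope ring_scope.

(* Order the vertices of T(k,k) as the centre, the k inner and the k outer vertices.
   Then xI - L has diagonal a = x - k, b = x - 2, c = x - 1 on these three layers and
   1 at every edge.  Replacing each inner column by c times itself minus the column of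
   its outer neighbour, and then the centre column by (bc - 1) times itself minus the
   new inner columns, makes the matrix upper triangular with diagonal a(bc - 1) - kc,
   (bc - 1)^k, c^k, while multiplying the determinant by (bc - 1) c^k.  Hence
   det (xI - L) = (a(bc - 1) - kc) (bc - 1)^(k-1), where bc - 1 = x^2 - 3x + 1 has
   the roots theta, theta-bar and a(bc - 1) - kc = x (x^2 - (k+3)x + 2k + 1). *)

Section SpiderNeighbours.
Variable k : nat.

Lemma spider_edge_centre l : spider_edge k k 0 l = (0 < l <= k)%N.
Proof. by rewrite /spider_edge; apply/idP/idP; lia. Qed.

Lemma spider_edge_inner r : (0 < r <= k)%N -> forall l,
  spider_edge k k r l = (l == 0)%N || (l == k + r)%N.
Proof. by move=> ? l; rewrite /spider_edge; apply/idP/idP; lia. Qed.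

Lemma spider_edge_outer r : (k < r <= k + k)%N -> forall l,
  spider_edge k k r l = (l == r - k)%N.
Proof. by move=> ? l; rewrite /spider_edge; apply/idP/idP; lia. Qed.

Lemma spider_edge_irrefl r : spider_edge k k r r = false.
Proof. by rewrite /spider_edge; apply/idP/idP; lia. Qed.

Variables (V : nmodType) (g : nat -> V).
Local Notation n := (k + k + 1)%N.

Lemma sum_spider_edge_centre :
  \sum_(l < n | spider_edge k k 0 l) g l = \sum_(1 <= l < k.+1) g l.
Proof.
rewrite -(big_mkord _ g) (eq_bigl _ _ spider_edge_centre).
rewrite (big_cat_nat _ (n := k.+1)) //=; last lia.
rewrite [X in _ + X]big_nat_cond [X in _ + X]big_pred0 ?addr0; last by move=> l; lia.
rewrite big_ltn_cond //= [in RHS]big_nat_cond big_nat_cond.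
by apply: eq_bigl => l; lia.
Qed.

Lemma sum_spider_edge_inner r : (0 < r <= k)%N ->
  \sum_(l < n | spider_edge k k r l) g l = g 0%N + g (k + r)%N.
Proof.
move=> r_inner; rewrite -(big_mkord _ g) (eq_bigl _ _ (spider_edge_inner _ r_inner)).
rewrite (bigID (pred1 0%N)) /=.
rewrite (eq_bigl (pred1 0%N)) ?big_nat1_eq; last by move=> l /=; apply/idP/idP; lia.
rewrite (eq_bigl (pred1 (k + r)%N)) ?big_nat1_eq; last by move=> l /=; apply/idP/idP; lia.
by rewrite !ifT //; lia.
Qed.

Lemma sum_spider_edge_outer r : (k < r <= k + k)%N ->
  \sum_(l < n | spider_edge k k r l) g l = g (r - k)%N.
Proof.
move=> r_outer; rewrite -(big_mkord _ g) (eq_bigl _ _ (spider_edge_outer _ r_outer)).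
by rewrite big_nat1_eq; case: ifP => //; lia.
Qed.

End SpiderNeighbours.

Lemma spider_vertex_cases {k} (v : 'I_(k + k + 1)) :
  [\/ v = 0 :> nat, (0 < v <= k)%N | (k < v <= k + k)%N].
Proof.
have v_lt := ltn_ord v; have [v0|v_pos] := posnP v; first by constructor 1.
by have [v_le|v_gt] := leqP v k; [constructor 2|constructor 3]; lia.
Qed.

Definition spider_layer {T : Type} (k : nat) (x y z : T) (i : nat) : T :=
  if i == 0%N then x else if (i <= k)%N then y else z.

Section SpiderLayer.
Variables (T : Type) (k : nat) (x y z : T).

Lemma spider_layer_inner i : (0 < i <= k)%N -> spider_layer k x y z i = y.
Proof. by rewrite /spider_layer => /andP[/gtn_eqF-> ->]. Qed.

Lemma spider_layer_outer i : (k < i)%N -> spider_layer k x y z i = z.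
Proof.
move=> k_lt_i; have i_pos := leq_ltn_trans (leq0n k) k_lt_i.
by rewrite /spider_layer gtn_eqF // leqNgt k_lt_i.
Qed.

End SpiderLayer.

Lemma deg_spider k (v : 'I_(k + k + 1)) :
  deg (spider_adj k k) v = (spider_layer k k 2 1 v)%N.
Proof.
rewrite /deg -sum1_card (eq_bigl (fun w : 'I_(k + k + 1) => spider_edge k k v w)).
  have [v0|v_inner|v_outer] := spider_vertex_cases v.
  - by rewrite v0 (sum_spider_edge_centre k nat (fun=> 1%N)) sumr_const_nat subn1 natn.
  - by rewrite (sum_spider_edge_inner k nat (fun=> 1%N) v) // spider_layer_inner.
  - rewrite (sum_spider_edge_outer k nat (fun=> 1%N) v) // spider_layer_outer //; lia.
by move=> w; rewrite inE.
Qed.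

Lemma prod_spider_layer (R : comSemiRingType) k (x y z : R) :
  \prod_(i < k + k + 1) spider_layer k x y z i = x * y ^+ k * z ^+ k.
Proof.
rewrite -(big_mkord xpredT) big_ltn ?addn1 // (big_cat_nat _ (n := k.+1)) //=; last lia.
rewrite (eq_big_nat _ _ (F2 := fun=> y)); last by move=> i ?; apply: spider_layer_inner; lia.
rewrite (eq_big_nat _ _ (m := k.+1) (F2 := fun=> z)); last first.
  by move=> i ?; apply: spider_layer_outer; lia.
by rewrite !prodr_const_nat subn1 subSS addnK mulrA.
Qed.

Section SpiderMatrix.
Context {R : comNzRingType} (k : nat) (a b c : R).
Local Notation n := (k + k + 1)%N.

Definition spider_mx : 'M[R]_n :=
  \matrix_(i, j) if i == j then spider_layer k a b c i else (spider_edge k k i j)%:R.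

Lemma mul_spider_mxE (f : nat -> nat -> R) (i j : 'I_n) :
  (spider_mx *m \matrix_(l, j) f l j) i j
  = spider_layer k a b c i * f i j + \sum_(l < n | spider_edge k k i l) f l j.
Proof.
rewrite !mxE (bigD1 i) //= !mxE eqxx; congr (_ + _).
rewrite big_mkcond [RHS]big_mkcond; apply: eq_bigr => l _; rewrite !mxE eq_sym.
have [<-|_] := eqVneq i l; first by rewrite spider_edge_irrefl.
by case: spider_edge; rewrite ?mul1r ?mul0r.
Qed.

Definition spider_elim (l j : nat) : R :=
  if l == j then spider_layer k (b * c - 1) c 1 j
  else if j == 0%N then (if (l <= k)%N then - c else 1)
  else if (j <= k)%N && (l == k + j)%N then -1 else 0.

Definition spider_echelon (i j : nat) : R :=
  if i == j then spider_layer k (a * (b * c - 1) - k%:R * c) (b * c - 1) c i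
  else if (i == 0%N) && (0 < j <= k)%N then c
  else if (0 < i <= k)%N && (j == k + i)%N then 1 else 0.

Local Ltac decide_ifs :=
  rewrite /spider_elim /spider_echelon /spider_layer /=;
  repeat (case: ifP => ?); try (exfalso; lia).

Lemma sum_inner_spider_elim j :
  \sum_(1 <= l < k.+1) spider_elim l j =
  if j == 0%N then - (c *+ k) else if (j <= k)%N then c else 0.
Proof.
have [->|j_pos] := posnP j.
  rewrite (eq_big_nat _ _ (F2 := fun=> - c)); last by move=> l ?; decide_ifs.
  by rewrite sumr_const_nat subn1 mulNrn.
rewrite (eq_big_nat _ _ (F2 := fun l => if l == j then c else 0)); last first.
  by move=> l ?; decide_ifs.
by rewrite -big_mkcond big_nat1_eq ltnS j_pos.
Qed.

Lemma spider_mx_elim :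
  spider_mx *m \matrix_(l, j) spider_elim l j = \matrix_(i < n, j < n) spider_echelon i j.
Proof.
apply/matrixP => i j; rewrite mul_spider_mxE mxE.
have j_lt := ltn_ord j; have [i0|i_in|i_out] := spider_vertex_cases i.
- rewrite i0 (sum_spider_edge_centre _ _ (spider_elim^~ j)) sum_inner_spider_elim.
  decide_ifs; ring.
- rewrite (sum_spider_edge_inner _ _ (spider_elim^~ j) _ i_in); decide_ifs; ring.
- rewrite (sum_spider_edge_outer _ _ (spider_elim^~ j) _ i_out); decide_ifs; ring.
Qed.

Lemma det_spider_elim : \det (\matrix_(l < n, j < n) spider_elim l j) = (b * c - 1) * c ^+ k.
Proof.
rewrite det_trig; last by apply/is_trig_mxP => l j lt_lj; rewrite mxE; decide_ifs.
under eq_bigr do rewrite mxE /spider_elim eqxx.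
by rewrite prod_spider_layer expr1n mulr1.
Qed.

Lemma det_spider_echelon :
  \det (\matrix_(i < n, j < n) spider_echelon i j)
  = (a * (b * c - 1) - k%:R * c) * (b * c - 1) ^+ k * c ^+ k.
Proof.
rewrite -det_tr det_trig; last by apply/is_trig_mxP => i j lt_ij; rewrite !mxE; decide_ifs.
under eq_bigr do rewrite !mxE /spider_echelon eqxx.
by rewrite prod_spider_layer.
Qed.

End SpiderMatrix.

Lemma det_spider_mx (R : idomainType) k (a b c : R) : c != 0 ->
  \det (spider_mx k a b c) * (b * c - 1)
  = (a * (b * c - 1) - k%:R * c) * (b * c - 1) ^+ k.
Proof.
move=> c_neq0; apply: (mulIf (expf_neq0 k c_neq0)).
rewrite -[LHS]mulrA -(det_spider_elim k b) -det_mulmx spider_mx_elim.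
exact: det_spider_echelon.
Qed.

Lemma char_poly_mx_spider (R : comNzRingType) k :
  char_poly_mx (laplacian R (spider_adj k k))
  = spider_mx k ('X - k%:R) ('X - 2%:R) ('X - 1).
Proof.
apply/matrixP => i j; rewrite !mxE /spider_adj.
have [<-|ne_ij] := eqVneq i j.
  rewrite spider_edge_irrefl deg_spider subr0 mulr1n.
  by rewrite /spider_layer; case: ifP => _; [|case: ifP => _]; rewrite polyC_natr.
by case: spider_edge; rewrite mulr0n !sub0r ?oppr0 ?opprK ?polyCN ?opprK.
Qed.

Lemma golden_factor (R : rcfType) :
  ('X - ((3 - Num.sqrt 5) / 2)%:P) * ('X - ((3 + Num.sqrt 5) / 2)%:P)
  = ('X - 2%:R) * ('X - 1) - 1 :> {poly R}.
Proof.
suff vieta (x y : R) : x + y = 3 -> x * y = 1 ->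
    ('X - x%:P) * ('X - y%:P) = ('X - 2%:R) * ('X - 1) - 1 :> {poly R}.
  have sqrt5_sq : Num.sqrt 5 ^+ 2 = 5 :> R by rewrite sqr_sqrtr // ler0n.
  by apply: vieta; [field | rewrite mulf_div -subr_sqr sqrt5_sq; field].
move=> sum_xy prod_xy.
transitivity ('X^2 - (x + y)%:P * 'X + (x * y)%:P); first by rewrite polyCD polyCM; ring.
by rewrite sum_xy prod_xy polyC1 polyC_natr; ring.
Qed.

Theorem proposition3p1 (R : rcfType) (k : nat) (l1 l2 : R) :
  (1 <= k)%N ->
  ('X - l1%:P) * ('X - l2%:P) = 'X^2 - (k + 3)%:R *: 'X + (2 * k + 1)%:R%:P ->
  spectrum_is (laplacian R (spider_adj k k))
    ([:: 0]
     ++ nseq k.-1 ((3 - Num.sqrt 5) / 2)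
     ++ [:: l1]
     ++ nseq k.-1 ((3 + Num.sqrt 5) / 2)
     ++ [:: l2]).
Proof.
move=> k_ge1 roots_l.
have c_neq0 : 'X - 1 != 0 :> {poly R} by rewrite -polyC1 polyXsubC_eq0.
have q_neq0 : ('X - 2%:R) * ('X - 1) - 1 != 0 :> {poly R}.
  by rewrite -golden_factor mulf_neq0 ?polyXsubC_eq0.
have cubic : ('X - k%:R) * (('X - 2%:R) * ('X - 1) - 1) - k%:R * ('X - 1)
             = 'X * (('X - l1%:P) * ('X - l2%:P)) :> {poly R}.
  by rewrite roots_l -mul_polyC !polyC_natr; ring.
rewrite /spectrum_is /char_poly char_poly_mx_spider; apply: (mulIf q_neq0).
rewrite det_spider_mx // cubic !big_cat !big_cons !big_nil !big_nseq !iter_mulr_1.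
rewrite /= polyC0 subr0 -golden_factor.
case: k k_ge1 {roots_l cubic q_neq0} => // k' _ /=.
by rewrite exprS exprMn; ring.
Qed.
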